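(* If $G$ is a connected graph with $\operatorname{im}(G)<\operatorname{reg}(G)=\operatorname{m}(G)$, then $G$ is isomorphic to the $5$-cycle $C_5$.
   Context: $\operatorname{reg}(G)=\max\{j\ge0:\widetilde H_{j-1}(\operatorname{Ind}(G[S]);\Bbbk)\neq0\text{ for some }S\subseteq V(G)\}$ over a fixed field $\Bbbk$ ($\operatorname{Ind}$ = independence complex). $\operatorname{im}(G)$ is the induced matching number and $\operatorname{m}(G)$ the matching number (maximum number of pairwise vertex-disjoint edges). *)

From HB Require Import structures.
From mathcomp Require Import all_boot all_order all_algebra.
Set Implicit Arguments. Unset Strict Implicit. Unset Printing Implicit Defensive.
Import GRing.Theory.

Section Graphs.
Variable T : finType.
Variable e : rel T.

Definition simple_graph : Prop := symmetric e /\ irreflexive e.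

Definition connected_graph : Prop := forall x y : T, connect e x y.

Definition independent (A : {set T}) : bool :=
  [forall x in A, forall y in A, ~~ e x y].

(* faces of Ind(G[S]) with exactly k vertices (dimension k-1);
   the empty face (k = 0) is included: reduced homology *)
Definition face (S : {set T}) (k : nat) (A : {set T}) : bool :=
  [&& A \subset S, independent A & #|A| == k].

Section Homology.
Variable K : fieldType.
Local Open Scope ring_scope.

Definition chain := {ffun {set T} -> K}.

Definition supported (S : {set T}) (k : nat) (c : chain) : Prop :=
  forall A, c A != 0 -> face S k A.

Definition vsign (v : T) (A : {set T}) : K :=
  (-1) ^+ #|[set u in A | (enum_rank u < enum_rank v)%N]|.

(* simplicial boundary: d(A) = sum_{v in A} sign(v,A) (A \ v) *)
Definition boundary (c : chain) : chain :=
  [ffun B : {set T} => \sum_(v : T | v \notin B) vsign v (v |: B) * c (v |: B)].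

(* \tilde H_{k-1}(Ind(G[S]); K) <> 0 : there is a (k-1)-cycle
   (chain on k-vertex faces) which is not a boundary *)
Definition redhom_nonzero (S : {set T}) (k : nat) : Prop :=
  exists z : chain, [/\ supported S k z, boundary z = 0 &
    ~ (exists c : chain, supported S k.+1 c /\ boundary c = z)].

Definition is_reg (r : nat) : Prop :=
  (exists S : {set T}, redhom_nonzero S r) /\
  (forall (S : {set T}) (j : nat), redhom_nonzero S j -> (j <= r)%N).
End Homology.

Definition is_edge (A : {set T}) : bool :=
  [exists x, exists y, (A == [set x; y]) && e x y].

Definition matching (M : {set {set T}}) : bool :=
  [forall A in M, is_edge A] &&
  [forall A in M, forall B in M, (A != B) ==> [disjoint A & B]].

Definition induced_matching (M : {set {set T}}) : bool :=
  matching M &&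
  [forall A in M, forall B in M, (A != B) ==>
     [forall x in A, forall y in B, ~~ e x y]].

Definition matching_number : nat := \max_(M | matching M) #|M|.
Definition induced_matching_number : nat := \max_(M | induced_matching M) #|M|.

End Graphs.

Definition C5rel (i j : 'I_5) : bool :=
  (val j == (val i).+1 %% 5)%N || (val i == (val j).+1 %% 5)%N.

Definition iso_C5 (T : finType) (e : rel T) : Prop :=
  exists f : T -> 'I_5, bijective f /\ forall x y, e x y = C5rel (f x) (f y).

(** Coning off a vertex [x] of [S] contracts the chains supported away from
   [x]; if [x] is isolated in [S] this kills all reduced homology.  Splitting a
   cycle into its part avoiding [x] and the cone over its link gives the exact
   sequence step: a nonzero class of [Ind(G[S])] in degree [j] yields one of
   [Ind(G[S \ x])] in degree [j] or of [Ind(G[S \ N[x]])] in degree [j - 1].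
   By induction [reg(G[S]) <= m(G[S])].  When equality holds, the same
   induction produces a packing of pairwise non-adjacent blocks inside [S],
   each an edge or an induced 5-cycle, of weight [reg] (an edge counts 1, a
   5-cycle 2): if no vertex can be deleted, every link [S \ N[x]] carries a
   packing of weight [reg - 1]; either some edge [xy] can be added to one of
   them, or counting matchings against [m(G[S]) = reg] forces every vertex onto
   an induced 5-cycle whose vertices have no further neighbours in [S], which
   then replaces an edge block.  Finally, if [im(G) < reg(G) = m(G)] the packing
   must contain a 5-cycle [Q]; an edge leaving [Q] would extend a maximum
   matching of the packing (a 5-cycle has a 2-matching avoiding any given
   vertex), so for connected [G] the 5-cycle is the whole graph. *)

From mathcomp Require Import all_boot all_order all_algebra.
From Stdlib Require Import Classical.
Set Implicit Arguments. Unset Strict Implicit. Unset Printing Implicit Defensive.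
Import GRing.Theory.

(** * Chains of the independence complex *)

Section Chains.
Variables (T : finType) (K : fieldType).
Local Open Scope ring_scope.
Implicit Types (c z : chain T K) (A B : {set T}) (x v : T).

Definition cone x c : chain T K :=
  [ffun A : {set T} => if x \in A then vsign K x A * c (A :\ x) else 0].

Definition avoids x c := forall A, x \in A -> c A = 0.

Definition deletion x c : chain T K :=
  [ffun A : {set T} => if x \in A then 0 else c A].

Definition link x c : chain T K :=
  [ffun B : {set T} => if x \in B then 0 else vsign K x (x |: B) * c (x |: B)].

Lemma vsign_sqr v A : vsign K v A * vsign K v A = 1.
Proof. by rewrite /vsign -expr2 sqrr_sign. Qed.

Lemma vsignU1 v y A : y \notin A ->
  vsign K v (y |: A) = (-1) ^+ (enum_rank y < enum_rank v)%N * vsign K v A.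
Proof.
move=> yA; rewrite /vsign -exprD; congr (_ ^+ _).
case Py: (enum_rank y < enum_rank v)%N.
  have -> : [set u in y |: A | (enum_rank u < enum_rank v)%N] =
            y |: [set u in A | (enum_rank u < enum_rank v)%N].
    by apply/setP=> u; rewrite !inE; case: (u =P y) => [->|]; rewrite ?Py.
  by rewrite cardsU1 inE (negbTE yA).
rewrite add0n; apply: eq_card => u; rewrite !inE.
by case: (u =P y) => [->|]; rewrite ?Py ?(negbTE yA).
Qed.

Lemma deletionD x c1 c2 : deletion x (c1 + c2) = deletion x c1 + deletion x c2.
Proof. by apply/ffunP=> A; rewrite !ffunE; case: ifP; rewrite ?addr0. Qed.

Lemma deletionN x c : deletion x (- c) = - deletion x c.
Proof. by apply/ffunP=> A; rewrite !ffunE; case: ifP; rewrite ?oppr0. Qed.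

Lemma deletion0 x : deletion x 0 = 0.
Proof. by apply/ffunP=> A; rewrite !ffunE if_same. Qed.

Lemma link0 x : link x 0 = 0.
Proof. by apply/ffunP=> A; rewrite !ffunE mulr0 if_same. Qed.

Lemma linkD x c1 c2 : link x (c1 + c2) = link x c1 + link x c2.
Proof. by apply/ffunP=> A; rewrite !ffunE; case: ifP; rewrite ?addr0 ?mulrDr. Qed.

Lemma linkN x c : link x (- c) = - link x c.
Proof. by apply/ffunP=> A; rewrite !ffunE; case: ifP; rewrite ?oppr0 ?mulrN. Qed.

Lemma deletion_id x c : avoids x c -> deletion x c = c.
Proof. by move=> hc; apply/ffunP=> A; rewrite ffunE; case: ifP => // /hc ->. Qed.

Lemma link_avoids x c : avoids x c -> link x c = 0.
Proof.
by move=> hc; apply/ffunP=> A; rewrite !ffunE hc ?setU11 // mulr0 if_same.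
Qed.

Lemma deletion_cone x c : deletion x (cone x c) = 0.
Proof. by apply/ffunP=> A; rewrite !ffunE; case: ifP => // ->. Qed.

Lemma link_cone x c : avoids x c -> link x (cone x c) = c.
Proof.
move=> hc; apply/ffunP=> A; rewrite !ffunE setU11; case: ifP => [/hc -> //|xA].
by rewrite mulrA vsign_sqr mul1r setU1K ?xA.
Qed.

Lemma boundaryD c1 c2 : boundary (c1 + c2) = boundary c1 + boundary c2.
Proof.
apply/ffunP=> B; rewrite !ffunE -big_split /=; apply: eq_bigr => v _.
by rewrite ?ffunE mulrDr.
Qed.

Lemma boundaryN c : boundary (- c) = - boundary c.
Proof.
apply/ffunP=> B; rewrite !ffunE -sumrN; apply: eq_bigr => v _.
by rewrite ?ffunE mulrN.
Qed.

Lemma boundaryB c1 c2 : boundary (c1 - c2) = boundary c1 - boundary c2.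
Proof. by rewrite boundaryD boundaryN. Qed.

Lemma boundary0 : boundary (0 : chain T K) = 0.
Proof. by apply/ffunP=> B; rewrite !ffunE big1 // => v _; rewrite ?ffunE mulr0. Qed.

Lemma coneN x c : cone x (- c) = - cone x c.
Proof.
apply/ffunP=> A; rewrite !ffunE; case: ifP => _; last by rewrite oppr0.
by rewrite ?ffunE mulrN.
Qed.

Lemma cone0 x : cone x 0 = 0.
Proof.
by apply/ffunP=> A; rewrite !ffunE; case: ifP => _ //; rewrite ?ffunE mulr0.
Qed.

Lemma vsign_swap x v B : x \in B -> v \notin B ->
  vsign K v (v |: B) * vsign K x (v |: B) =
  - (vsign K x B * vsign K v (v |: (B :\ x))).
Proof.
move=> xB vB; have vx : v != x by apply: contraNneq vB => ->.
have xBx : x \notin B :\ x by rewrite !inE eqxx.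
have vBx : v \notin B :\ x by rewrite !inE negb_and vB orbT.
rewrite -[in LHS](setD1K xB) -[in vsign K x B](setD1K xB).
rewrite !vsignU1 ?ltnn ?expr0 ?mul1r ?inE ?negb_or ?eqxx ?vx //.
have [ltxv|ltvx|exv] := ltngtP (enum_rank x) (enum_rank v).
- by rewrite expr1 mulN1r mul1r mulNr mulrC.
- by rewrite expr1 mulN1r mul1r mulrN mulrC.
- by move/val_inj/enum_rank_inj: exv vx => ->; rewrite eqxx.
Qed.

Lemma boundary_cone x c : avoids x c ->
  boundary (cone x c) = c - cone x (boundary c).
Proof.
move=> hc; apply/ffunP=> B.
rewrite [LHS]ffunE [RHS]ffunE [X in _ = _ + X]ffunE [X in _ = _ - X]ffunE.
case xB: (x \in B).
  rewrite hc // sub0r [boundary c _]ffunE.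
  rewrite [X in _ = - (_ * X)](bigD1 x) /=; last by rewrite !inE eqxx.
  rewrite setD1K // hc // mulr0 add0r mulr_sumr -sumrN.
  apply: eq_big => [v|v vB].
    rewrite !inE negb_and negbK.
    by case: (v =P x) => [->|_]; rewrite ?xB ?eqxx ?andbT ?andbF.
  have vx : v != x by apply: contraNneq vB => ->.
  have vBx : (v |: B) :\ x = v |: (B :\ x).
    by apply/setP=> u; rewrite !inE; case: (u =P v) => [->|]; rewrite ?vx.
  by rewrite ffunE !inE xB orbT vBx mulrA vsign_swap // mulNr mulrA.
rewrite (bigD1 x) /=; last by rewrite xB.
rewrite ffunE setU11 mulrA vsign_sqr mul1r setU1K ?xB //.
rewrite big1 ?addr0 ?subr0 // => v /andP [vB vx].
by rewrite ffunE !inE eq_sym (negbTE vx) xB mulr0.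
Qed.

Lemma deletion_coneE x z : z = deletion x z + cone x (link x z).
Proof.
apply/ffunP=> A; rewrite !ffunE; case: ifP => xA; rewrite ?add0r ?addr0 //.
by rewrite ?ffunE !inE eqxx /= setD1K // mulrA vsign_sqr mul1r.
Qed.

Lemma avoids_deletion x z : avoids x (deletion x z).
Proof. by move=> A xA; rewrite ffunE xA. Qed.

Lemma avoids_link x z : avoids x (link x z).
Proof. by move=> A xA; rewrite ffunE xA. Qed.

Lemma avoids_boundary x c : avoids x c -> avoids x (boundary c).
Proof.
move=> h A xA; rewrite ffunE big1 // => v _.
by rewrite h ?mulr0 // inE xA orbT.
Qed.

Lemma boundary_deletion_cone x z : boundary z =
  boundary (deletion x z) + (link x z - cone x (boundary (link x z))).
Proof.
by rewrite {1}(deletion_coneE x z) boundaryD boundary_cone //; apply: avoids_link.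
Qed.

Lemma deletion_boundary x z :
  deletion x (boundary z) = boundary (deletion x z) + link x z.
Proof.
have hz0 := avoids_boundary (avoids_deletion (x := x) z).
rewrite (boundary_deletion_cone x z) !(deletionD, deletionN) deletion_cone.
by rewrite subr0 (deletion_id hz0) (deletion_id (avoids_link (x := x) z)).
Qed.

Lemma boundary_link x z : boundary (link x z) = - link x (boundary z).
Proof.
have hz0 := avoids_boundary (avoids_deletion (x := x) z).
have hu := avoids_boundary (avoids_link (x := x) z).
rewrite (boundary_deletion_cone x z) !(linkD, linkN) (link_cone hu).
rewrite (link_avoids hz0) (link_avoids (avoids_link (x := x) z)).
by rewrite add0r sub0r opprK.
Qed.

End Chains.

Section IndependenceComplex.
Variables (T : finType) (e : rel T) (K : fieldType).
Hypotheses (e_sym : symmetric e) (e_irr : irreflexive e).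
Local Open Scope ring_scope.
Implicit Types (c z : chain T K) (A B S : {set T}) (x y : T).

Definition cnbhd x : {set T} := x |: [set y | e x y].

Lemma supported0 S k : supported e S k (0 : chain T K).
Proof. by move=> A; rewrite ffunE eqxx. Qed.

Lemma supportedD S k c1 c2 : supported e S k c1 -> supported e S k c2 ->
  supported e S k (c1 + c2).
Proof.
move=> h1 h2 A; rewrite ffunE => h.
have [h0|/eqP] := c1 A =P 0; last exact: h1.
by apply: h2; rewrite h0 add0r in h.
Qed.

Lemma supportedN S k c : supported e S k c -> supported e S k (- c).
Proof. by move=> h A; rewrite ffunE oppr_eq0; apply: h. Qed.

Lemma supported_sub S S' k c : S \subset S' ->
  supported e S k c -> supported e S' k c.
Proof.
move=> sSS' h A /h /and3P [sAS hi hk].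
by apply/and3P; split => //; apply: subset_trans sSS'.
Qed.

Lemma independent_sub A B : A \subset B -> independent e B -> independent e A.
Proof.
move=> sAB /forallP hB; apply/forallP => a; apply/implyP => aA.
have := hB a; rewrite (subsetP sAB a aA) /= => /forallP hb.
apply/forallP => b; apply/implyP => bA.
by have := hb b; rewrite (subsetP sAB b bA).
Qed.

Lemma independentU1 x B : (forall y, y \in B -> ~~ e x y) -> independent e B ->
  independent e (x |: B).
Proof.
move=> hx /forallP hB; apply/forallP => a; apply/implyP => /setU1P aA.
apply/forallP => b; apply/implyP => /setU1P bA.
case: aA => [->|aB]; case: bA => [->|bB].
- by rewrite e_irr.
- exact: hx.
- by rewrite e_sym; apply: hx.
- by have := hB a; rewrite aB /= => /forallP /(_ b); rewrite bB.
Qed.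

Lemma face_setU1 S k x B : x \in S -> face e S k B -> x \notin B ->
  (forall y, y \in B -> ~~ e x y) -> face e S k.+1 (x |: B).
Proof.
move=> xS /and3P [sBS hi /eqP hk] xB hx; apply/and3P; split.
- by rewrite subUset sub1set xS.
- exact: independentU1.
- by rewrite cardsU1 xB hk.
Qed.

Lemma face_link S k x B : face e S k.+1 (x |: B) -> x \notin B ->
  face e (S :\: cnbhd x) k B.
Proof.
move=> /and3P [sS hi /eqP hk] xB; apply/and3P; split.
- apply/subsetP => b bB; rewrite !inE negb_or.
  have -> /= : b != x by apply: contraNneq xB => <-.
  have := hi; move=> /forallP /(_ x); rewrite setU11 /= => /forallP /(_ b).
  rewrite inE bB orbT /= => -> /=.
  by apply: (subsetP sS); rewrite inE bB orbT.
- by apply: independent_sub hi; apply: subsetUr.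
- by rewrite cardsU1 xB add1n in hk; case: hk => ->.
Qed.

Lemma face_setD1 S k x A : face e S k A -> x \notin A -> face e (S :\ x) k A.
Proof.
move=> /and3P [sAS hi hk] xA; apply/and3P; split => //.
apply/subsetP => a aA; rewrite !inE (subsetP sAS a aA) andbT.
by apply: contraNneq xA => <-.
Qed.

Lemma supported_cone S k x c : x \in S -> supported e S k c ->
  (forall B, c B != 0 -> x \notin B /\ forall y, y \in B -> ~~ e x y) ->
  supported e S k.+1 (cone x c).
Proof.
move=> xS hs hc A; rewrite ffunE; case: ifP => xA; last by rewrite eqxx.
rewrite mulf_eq0 negb_or => /andP [_ hcA]; have [hx hy] := hc _ hcA.
by rewrite -(setD1K xA); apply: face_setU1 => //; apply: hs.
Qed.

Lemma redhomPn S k : ~ redhom_nonzero e K S k -> forall z,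
  supported e S k z -> boundary z = 0 ->
  exists c, supported e S k.+1 c /\ boundary c = z.
Proof. by move=> H z hs hb; apply: NNPP => hn; apply: H; exists z; split. Qed.

(* an isolated vertex [x] of [S] is a cone point of [Ind(G[S])] *)
Lemma redhom_isolated S k x : x \in S -> (forall y, y \in S -> ~~ e x y) ->
  ~ redhom_nonzero e K S k.
Proof.
move=> xS hx [z [hs hb []]].
set z0 := deletion x z; set u := link x z.
have hu : u = - boundary z0.
  by apply/eqP; rewrite -addr_eq0 addrC -deletion_boundary hb deletion0.
exists (cone x z0); split.
  apply: supported_cone => // [A|B]; rewrite ffunE; case: ifP => xB //.
  - by rewrite eqxx.
  - exact: hs.
  - by rewrite eqxx.
  move=> /hs /and3P [sBS _ _]; split => // y yB.
  exact/hx/(subsetP sBS).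
rewrite boundary_cone; last exact: avoids_deletion.
by rewrite [RHS](deletion_coneE x z) -/z0 -/u hu coneN.
Qed.

(* the long exact sequence of the pair [(Ind(G[S]), Ind(G[S \ x]))], whose
   relative homology is that of the link [Ind(G[S \ N[x]])] shifted by one *)
Lemma redhom_split S j x : x \in S -> redhom_nonzero e K S j.+1 ->
  redhom_nonzero e K (S :\ x) j.+1 \/
  redhom_nonzero e K (S :\: cnbhd x) j.
Proof.
move=> xS [z [hs hb hn]]; apply: NNPP => /not_or_and [h1 h2]; apply: hn.
set N := S :\: cnbhd x; set z0 := deletion x z; set u := link x z.
have hus : supported e N j u.
  move=> B; rewrite ffunE; case: ifP => xB; first by rewrite eqxx.
  rewrite mulf_eq0 negb_or => /andP [_ hzB].
  by apply: face_link; [apply: hs | rewrite xB].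
have hbu : boundary u = 0 by rewrite boundary_link hb link0 oppr0.
have [c [hcs hcb]] := redhomPn h2 hus hbu.
have hcN A : c A != 0 -> A \subset N by move/hcs/and3P => [].
have hcx : avoids x c.
  move=> A xA; apply/eqP; apply: contraT => /hcN/subsetP/(_ x xA).
  by rewrite !inE eqxx.
have sNS : N \subset S :\ x.
  by apply/subsetP => y; rewrite !inE negb_or => /andP [/andP [-> _] ->].
have hzc : supported e (S :\ x) j.+1 (z0 + c).
  apply: supportedD; last exact: supported_sub sNS hcs.
  move=> A; rewrite ffunE; case: ifP => xA; first by rewrite eqxx.
  by move=> hA; apply: face_setD1; [apply: hs | rewrite xA].
have hzb : boundary (z0 + c) = 0.
  by rewrite boundaryD hcb -deletion_boundary hb deletion0.
have [c' [hc's hc'b]] := redhomPn h1 hzc hzb.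
exists (c' - cone x c); split.
  apply: supportedD; first by apply: supported_sub hc's; apply: subD1set.
  apply/supportedN/supported_cone => //.
    by apply: supported_sub hcs; apply: subset_trans sNS (subD1set S x).
  move=> B /hcN sB; split.
    by apply/negP => /(subsetP sB); rewrite !inE eqxx.
  by move=> y /(subsetP sB); rewrite !inE negb_or => /andP [/andP [_ ->] _].
rewrite boundaryB hc'b boundary_cone // hcb [RHS](deletion_coneE x z) -/z0 -/u.
by rewrite opprB (addrC (cone x u)) addrA addrK.
Qed.

Lemma redhom0_set0 S : redhom_nonzero e K S 0 -> S = set0.
Proof.
move=> [z [hs hb hn]]; apply/eqP; apply: contraT => /set0Pn [x xS].
exfalso; apply: hn.
have h0 B : z B != 0 -> B = set0 by move/hs/and3P => [_ _ /eqP /cards0_eq].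
have hzx : avoids x z.
  by move=> A xA; apply/eqP; apply: contraT => /h0 hA; rewrite hA inE in xA.
exists (cone x z); split.
  by apply: supported_cone => // B /h0 ->; split => [|y]; rewrite inE.
by rewrite boundary_cone // hb cone0 subr0.
Qed.

Lemma redhom_set0 k : redhom_nonzero e K set0 k -> k = 0%N.
Proof.
case: k => // j [z [hs hb []]]; exists 0; split; first exact: supported0.
rewrite boundary0; apply/ffunP => A; rewrite ffunE; apply/esym/eqP.
apply: contraT => /hs /and3P [].
by rewrite subset0 => /eqP -> _; rewrite cards0.
Qed.

End IndependenceComplex.

(** * Regularity and matchings *)

Section Matchings.
Variables (T : finType) (e : rel T).
Hypotheses (e_sym : symmetric e) (e_irr : irreflexive e).
Implicit Types (A B S : {set T}) (M : {set {set T}}) (a b x y : T).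

Lemma neq_edge a b : e a b -> a != b.
Proof. by apply: contraTneq => ->; rewrite e_irr. Qed.

Lemma matchingP M : reflect ((forall A, A \in M -> is_edge e A) /\
   (forall A B, A \in M -> B \in M -> A != B -> [disjoint A & B])) (matching e M).
Proof.
apply: (iffP andP) => [[/forallP h1 /forallP h2]|[h1 h2]]; split.
- by move=> A AM; have := h1 A; rewrite AM.
- move=> A B AM BM AB; have := h2 A; rewrite AM /= => /forallP /(_ B).
  by rewrite BM AB.
- by apply/forallP => A; apply/implyP; apply: h1.
- apply/forallP => A; apply/implyP => AM; apply/forallP => B; apply/implyP => BM.
  by apply/implyP; apply: h2.
Qed.

Lemma is_edgeP A : reflect (exists a b, A = [set a; b] /\ e a b) (is_edge e A).
Proof.
apply: (iffP existsP) => [[a /existsP [b /andP [/eqP -> h]]]|[a [b [-> h]]]].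
  by exists a, b.
by exists a; apply/existsP; exists b; rewrite eqxx.
Qed.

Lemma card_edge A : is_edge e A -> #|A| = 2.
Proof. by move/is_edgeP => [a [b [-> h]]]; rewrite cards2 neq_edge. Qed.

Lemma matching0 : matching e set0.
Proof. by apply/matchingP; split => A; rewrite inE. Qed.

Lemma matching1 a b : e a b -> matching e [set [set a; b]].
Proof.
move=> h; apply/matchingP; split.
  by move=> A; rewrite inE => /eqP ->; apply/is_edgeP; exists a, b.
by move=> A B; rewrite !inE => /eqP -> /eqP ->; rewrite eqxx.
Qed.

Lemma matchingU M1 M2 : matching e M1 -> matching e M2 ->
  (forall A B, A \in M1 -> B \in M2 -> [disjoint A & B]) ->
  matching e (M1 :|: M2) /\ #|M1 :|: M2| = #|M1| + #|M2|.
Proof.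
move=> /matchingP [h1 h1'] /matchingP [h2 h2'] hd; split.
  apply/matchingP; split.
    by move=> A /setUP [] ?; [apply: h1 | apply: h2].
  move=> A B /setUP [] hA /setUP [] hB AB.
  - exact: h1'.
  - exact: hd.
  - by rewrite disjoint_sym; apply: hd.
  - exact: h2'.
rewrite cardsU; suff -> : M1 :&: M2 = set0 by rewrite cards0 subn0.
apply/setP => A; rewrite !inE; apply/negP => /andP [hA hB].
have := hd A A hA hB; rewrite -setI_eq0 setIid => /eqP A0.
by have := card_edge (h1 A hA); rewrite A0 cards0.
Qed.

Lemma matchingU1 M a b : matching e M -> e a b ->
  (forall A, A \in M -> (a \notin A) && (b \notin A)) ->
  matching e ([set a; b] |: M) /\ #|[set a; b] |: M| = #|M|.+1.
Proof.
move=> hM hab hA.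
have [] := @matchingU [set [set a; b]] M (matching1 hab) hM.
  move=> A B; rewrite inE => /eqP -> /hA /andP [aB bB].
  by rewrite disjoints_subset; apply/subsetP => u; rewrite !inE => /orP [] /eqP ->.
by rewrite cards1 add1n.
Qed.

Definition mnum_in S : nat :=
  \max_(M | matching e M && [forall A in M, A \subset S]) #|M|.

Lemma mnum_in_max S M : matching e M -> (forall A, A \in M -> A \subset S) ->
  #|M| <= mnum_in S.
Proof.
move=> hM hS; apply: (@leq_bigmax_cond _ (fun M => _ && _)).
by rewrite hM /=; apply/forallP => A; apply/implyP; apply: hS.
Qed.

Lemma mnum_inP S : exists2 M, matching e M /\ (forall A, A \in M -> A \subset S) &
  #|M| = mnum_in S.
Proof.
have h0 : 0 < #|[pred M | matching e M && [forall A in M, A \subset S]]|.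
  apply/card_gt0P; exists set0; rewrite inE /= matching0.
  by apply/forallP => A; rewrite inE.
have [M] := eq_bigmax_cond (fun M : {set {set T}} => #|M|) h0.
rewrite inE => /andP [hM /forallP hS] eqM.
by exists M; [split => // A AM; have := hS A; rewrite AM | apply/esym/eqM].
Qed.

Lemma mnum_in_mono S S' : S \subset S' -> mnum_in S <= mnum_in S'.
Proof.
move=> sSS'; have [M [hM hS] <-] := mnum_inP S.
by apply: mnum_in_max => // A /hS /subset_trans; apply.
Qed.

Lemma mnum_in_cnbhd S x y : x \in S -> y \in S -> e x y ->
  (mnum_in (S :\: cnbhd e x)).+1 <= mnum_in S.
Proof.
move=> xS yS hxy; have [M [hM hS] <-] := mnum_inP (S :\: cnbhd e x).
have hA A : A \in M -> (x \notin A) && (y \notin A).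
  move=> /hS sA; apply/andP; split; apply/negP => /(subsetP sA); rewrite !inE.
    by rewrite eqxx.
  by rewrite hxy orbT.
have [hM' <-] := matchingU1 hM hxy hA; apply: mnum_in_max hM' _.
move=> A /setU1P [->|/hS sA]; first by rewrite subUset !sub1set xS yS.
exact: subset_trans sA (subsetDl _ _).
Qed.

Lemma mnum_in_le S : mnum_in S <= matching_number e.
Proof.
have [M [hM _] <-] := mnum_inP S.
exact: (@leq_bigmax_cond _ (fun M => matching e M)).
Qed.

Lemma redhom_le_mnum_in (K : fieldType) S k :
  redhom_nonzero e K S k -> k <= mnum_in S.
Proof.
have [n] := ubnP #|S|; elim: n S k => // n IH S k /ltnSE leSn hr.
have [S0|[x xS]] := set_0Vmem S.
  by rewrite S0 in hr; rewrite (redhom_set0 hr).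
have ltS A : x \in A -> #|S :\: A| < n.
  move=> xA; apply: leq_trans leSn; rewrite (cardsD1 x S) xS add1n ltnS.
  apply/subset_leq_card/subsetP => t; rewrite !inE => /andP [tA ->].
  by rewrite andbT; apply: contraNneq tA => ->.
case: k hr => // j hr.
have [/existsP [y /andP [yS hxy]]|/existsPn hiso] := boolP [exists y in S, e x y].
  have [h|h] := redhom_split e_sym e_irr xS hr.
    apply: leq_trans (IH _ _ (ltS _ (set11 x)) h) (mnum_in_mono (subD1set S x)).
  exact: leq_ltn_trans (IH _ _ (ltS _ (setU11 x _)) h) (mnum_in_cnbhd xS yS hxy).
exfalso; apply: (redhom_isolated e_sym e_irr xS _ hr) => y yS.
by have := hiso y; rewrite yS.
Qed.

End Matchings.

(** * Packings by edges and induced 5-cycles *)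

Section Packings.
Variables (T : finType) (e : rel T).
Hypotheses (e_sym : symmetric e) (e_irr : irreflexive e).
Implicit Types (A B Q : {set T}) (M P : {set {set T}}) (a b c d g t u v w : T).

Definition c5 a b c d g : bool := [&& uniq [:: a; b; c; d; g], e a b, e b c,
  e c d, e d g, e g a, ~~ e a c, ~~ e a d, ~~ e b d, ~~ e b g & ~~ e c g].

Lemma c5_rot a b c d g : c5 a b c d g -> c5 b c d g a.
Proof.
move=> /and4P [u h1 h2 /and4P [h3 h4 h5 /and4P [n1 n2 n3 /andP [n4 n5]]]].
apply/and4P; split => //; first by have := u; rewrite -(rot_uniq 1).
apply/and4P; split => //; apply/and4P; split => //.
by apply/andP; split; rewrite e_sym.
Qed.

Lemma set5_rot a b c d g : [set b; c; d; g; a] = [set a; b; c; d; g].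
Proof. by apply/setP => t; rewrite !inE; case: (t == a); rewrite ?orbT ?orbF. Qed.

Lemma c5_uniq a b c d g : c5 a b c d g -> uniq [:: a; b; c; d; g].
Proof. by case/andP. Qed.

Lemma set5E a b c d g : [set a; b; c; d; g] = [set t in [:: a; b; c; d; g]].
Proof. by apply/setP => t; rewrite !inE !orbA. Qed.

Lemma set5P t a b c d g : reflect (t = a \/ t = b \/ t = c \/ t = d \/ t = g)
  (t \in [set a; b; c; d; g]).
Proof.
rewrite !inE -!orbA; apply: (iffP idP).
  by case/or4P => [/eqP|/eqP|/eqP|/orP [/eqP|/eqP]]; tauto.
by case=> [|[|[|[|]]]] ->; rewrite eqxx ?orbT.
Qed.

Lemma card_c5 a b c d g : c5 a b c d g -> #|[set a; b; c; d; g]| = 5.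
Proof. by move/c5_uniq/card_uniqP; rewrite set5E cardsE => ->. Qed.

Lemma c5_matching0 a b c d g : c5 a b c d g -> exists2 M, matching e M /\ #|M| = 2 &
  forall A, A \in M -> A \subset [set a; b; c; d; g] /\ a \notin A.
Proof.
move=> /and4P [u _ bc /and4P [_ dg _ _]].
move: u; rewrite /= !inE !negb_or => /and5P [/and4P [ab ac ad ag] /and3P [bc' bd bg]
  /andP [cd cg] dg' _].
have hA A : A \in [set [set d; g]] -> (b \notin A) && (c \notin A).
  by rewrite inE => /eqP ->; rewrite !inE !negb_or bd bg cd cg.
have [hM hc] := matchingU1 e_irr (matching1 dg) bc hA.
exists ([set b; c] |: [set [set d; g]]); first by rewrite hc cards1.
move=> A /setU1P [->|]; last rewrite inE => /eqP ->.
  split; last by rewrite !inE negb_or ab ac.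
  by apply/subsetP => t; rewrite !inE => /orP [] ->; rewrite ?orbT.
split; last by rewrite !inE negb_or ad ag.
by apply/subsetP => t; rewrite !inE => /orP [] ->; rewrite ?orbT.
Qed.

Lemma c5_matching w a b c d g : c5 a b c d g -> w \in [set a; b; c; d; g] ->
  exists2 M, matching e M /\ #|M| = 2 &
  forall A, A \in M -> A \subset [set a; b; c; d; g] /\ w \notin A.
Proof.
move=> h /set5P [|[|[|[|]]]] ->.
- exact: c5_matching0.
- by rewrite -(set5_rot a); apply/c5_matching0/c5_rot.
- by rewrite -(set5_rot a) -(set5_rot b); apply/c5_matching0/c5_rot/c5_rot.
- rewrite -(set5_rot a) -(set5_rot b) -(set5_rot c).
  by apply/c5_matching0/c5_rot/c5_rot/c5_rot.
- rewrite -(set5_rot a) -(set5_rot b) -(set5_rot c) -(set5_rot d).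
  by apply/c5_matching0/c5_rot/c5_rot/c5_rot/c5_rot.
Qed.

Definition is_c5 Q := exists a b c d g, c5 a b c d g /\ Q = [set a; b; c; d; g].

Definition block B := is_edge e B \/ is_c5 B.

Definition packing P := (forall B, B \in P -> block B) /\
  (forall B1 B2, B1 \in P -> B2 \in P -> B1 != B2 ->
     [disjoint B1 & B2] /\ (forall u v, u \in B1 -> v \in B2 -> ~~ e u v)).

(* an edge contributes 1 and a 5-cycle 2: the size of a maximum matching *)
Definition weight P := \sum_(B in P) #|B| %/ 2.

Lemma block_neq0 B : block B -> exists t, t \in B.
Proof.
by case=> [/is_edgeP [a [b [-> _]]]|[a [b [c [d [g [_ ->]]]]]]];
  exists a; rewrite !inE eqxx.
Qed.

Lemma packing_sub P P' : P' \subset P -> packing P -> packing P'.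
Proof.
move=> sP [h1 h2]; split; first by move=> B /(subsetP sP); apply: h1.
by move=> B1 B2 /(subsetP sP) h /(subsetP sP) h'; apply: h2.
Qed.

Lemma packing_block_eq P B1 B2 t : packing P -> B1 \in P -> B2 \in P ->
  t \in B1 -> t \in B2 -> B1 = B2.
Proof.
move=> [_ h] h1 h2 t1 t2; apply/eqP; apply: contraT => /(h _ _ h1 h2) [hd _].
by move: hd => /disjoint_setI0/setP/(_ t); rewrite !inE t1 t2.
Qed.

Lemma packing_nonadj P B1 B2 u v : packing P -> B1 \in P -> B2 \in P ->
  B1 != B2 -> u \in B1 -> v \in B2 -> ~~ e u v.
Proof. by move=> [_ h] h1 h2 hne; apply: (h _ _ h1 h2 hne).2. Qed.

Lemma weightD1 P B : B \in P -> weight P = #|B| %/ 2 + weight (P :\ B).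
Proof. by move=> BP; rewrite /weight (big_setD1 B BP). Qed.

Lemma cover_subset P P' : P' \subset P -> cover P' \subset cover P.
Proof.
move=> sP; apply/subsetP => t /bigcupP [B BP tB].
by apply/bigcupP; exists B => //; apply: (subsetP sP).
Qed.

Lemma packing_coverD1 P B t : packing P -> B \in P -> t \in cover (P :\ B) ->
  t \in cover P /\ t \notin B.
Proof.
move=> hP BP /bigcupP [B' /setD1P [hne B'P] tB']; split.
  by apply/bigcupP; exists B'.
by apply/negP => tB; move/eqP: hne; rewrite (packing_block_eq hP B'P BP tB' tB).
Qed.

Lemma packingU1 P B : packing P -> block B ->
  (forall t, t \in B -> t \notin cover P /\ forall s, s \in cover P -> ~~ e t s) ->
  [/\ packing (B |: P), weight (B |: P) = #|B| %/ 2 + weight P &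
      cover (B |: P) = B :|: cover P].
Proof.
move=> [h1 h2] hB hd.
have BP : B \notin P.
  apply/negP => BP; have [t tB] := block_neq0 hB.
  by have [/negP []] := hd t tB; apply/bigcupP; exists B.
have hx B2 : B2 \in P -> [disjoint B & B2] /\
    (forall u v, u \in B -> v \in B2 -> ~~ e u v).
  move=> B2P; split.
    rewrite disjoints_subset; apply/subsetP => u uB; rewrite inE.
    have [/negP hn _] := hd u uB; apply/negP => uB2; apply: hn.
    by apply/bigcupP; exists B2.
  by move=> u v uB vB2; apply: (hd u uB).2; apply/bigcupP; exists B2.
split; last by rewrite /cover big_setU1.
- split; first by move=> B' /setU1P [->|]; [exact: hB | apply: h1].
  move=> B1 B2 /setU1P [->|B1P] /setU1P [->|B2P] hne.
  + by rewrite eqxx in hne.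
  + exact: hx.
  + have [h h'] := hx B1 B1P; split; first by rewrite disjoint_sym.
    by move=> u v uB1 vB; rewrite e_sym; apply: h'.
  + exact: h2.
- by rewrite /weight big_setU1.
Qed.

Lemma block_matching B w : block B -> (w \in B -> is_c5 B) ->
  exists2 M, matching e M /\ #|M| = #|B| %/ 2 &
     forall A, A \in M -> A \subset B /\ w \notin A.
Proof.
move=> hB hw; have [[a [b [c [d [g [h ->]]]]]]|hnC] := classic (is_c5 B).
  rewrite card_c5 //; have [wB|wB] := boolP (w \in [set a; b; c; d; g]).
    exact: c5_matching.
  have aQ : a \in [set a; b; c; d; g] by rewrite !inE eqxx.
  have [M hM hA] := c5_matching h aQ.
  exists M => // A /hA [sA _]; split => //.
  by apply: contra wB; apply: (subsetP sA).
case: hB => // hE; exists [set B].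
  rewrite cards1 (card_edge e_irr hE).
  by have /is_edgeP [a [b [-> hab]]] := hE; rewrite matching1.
by move=> A; rewrite inE => /eqP ->; split => //; apply/negP => /hw.
Qed.

Lemma packing_matching P w : packing P ->
  (forall B, B \in P -> w \in B -> is_c5 B) ->
  exists2 M, matching e M /\ #|M| = weight P &
    forall A, A \in M -> A \subset cover P /\ w \notin A.
Proof.
have [n] := ubnP #|P|; elim: n P => // n IH P /ltnSE leP hP hw.
have [P0|[B BP]] := set_0Vmem P.
  exists set0; first by rewrite matching0 P0 cards0 /weight big_set0.
  by move=> A; rewrite inE.
have hP' := packing_sub (subD1set P B) hP.
have ltP' : #|P :\ B| < n by apply: leq_trans leP; rewrite (cardsD1 B P) BP.
have hw' B' : B' \in P :\ B -> w \in B' -> is_c5 B' by case/setD1P => _; apply: hw.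
have [M' [hM' hc'] hA'] := IH _ ltP' hP' hw'.
have [MB [hMB hcB] hAB] := block_matching (hP.1 B BP) (hw B BP).
have hd A A2 : A \in M' -> A2 \in MB -> [disjoint A & A2].
  move=> /hA' [sA _] /hAB [sA2 _].
  rewrite disjoints_subset; apply/subsetP => u uA; rewrite inE.
  have [_] := packing_coverD1 hP BP (subsetP sA u uA).
  by apply: contra; apply: (subsetP sA2).
have [hM hc] := matchingU e_irr hM' hMB hd.
exists (M' :|: MB); first by rewrite hM hc hc' hcB (weightD1 BP) addnC.
move=> A /setUP [/hA' [sA wA]|/hAB [sA wA]]; split => //.
  exact: subset_trans sA (cover_subset (subD1set P B)).
by apply: subset_trans sA _; apply: (bigcup_sup B).
Qed.

End Packings.

(** * The extremal case [reg = m] *)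

Section LinkPackings.
Variables (T : finType) (e : rel T) (S : {set T}) (j : nat).
Hypotheses (e_sym : symmetric e) (e_irr : irreflexive e).
Implicit Types (A B : {set T}) (P : {set {set T}}) (t u v x y : T).

Lemma in_setD_cnbhd v t :
  t \in S :\: cnbhd e v -> [/\ t \in S, t != v & ~~ e v t].
Proof. by rewrite !inE negb_or => /andP [/andP [-> ->] ->]. Qed.

Lemma notin_set2 u x y : u != x -> u != y -> u \notin [set x; y].
Proof. by move=> h1 h2; rewrite !inE negb_or h1 h2. Qed.

Lemma notin_subset A B u : A \subset B -> u \notin B -> u \notin A.
Proof. by move=> sAB; apply: contra; apply: (subsetP sAB). Qed.

Lemma neq_mem_notin A u v : u \in A -> v \notin A -> u != v.
Proof. by move=> uA; apply: contraNneq => <-. Qed.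

Lemma set2_subset x y A : x \in A -> y \in A -> [set x; y] \subset A.
Proof. by move=> hx hy; rewrite subUset !sub1set hx hy. Qed.

Definition link_packing v P :=
  [/\ packing e P, cover P \subset S :\: cnbhd e v & weight P = j].

Lemma link_packing_cover v P t : link_packing v P -> t \in cover P ->
  [/\ t \in S, t != v & ~~ e v t].
Proof. by case=> _ hc _ /(subsetP hc); apply: in_setD_cnbhd. Qed.

Lemma link_packing_notin v P u : link_packing v P -> (u == v) || e v u ->
  u \notin cover P.
Proof.
move=> hP hu; apply/negP => /(link_packing_cover hP) [_ h1 h2].
by case/orP: hu => [/eqP hu|hu]; [rewrite hu eqxx in h1 | rewrite hu in h2].
Qed.

Lemma link_packing_sub v P : link_packing v P -> cover P \subset S.
Proof. by case=> _ hc _; apply: subset_trans hc (subsetDl _ _). Qed.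

Lemma link_packing_add_edge v P y : v \in S -> link_packing v P ->
  y \in S -> e v y -> (forall t, t \in cover P -> ~~ e y t) ->
  exists P', [/\ packing e P', cover P' \subset S & weight P' = j.+1].
Proof.
move=> vS hP yS vy hy; have [hPc hPS hPw] := hP.
have hB : block e [set v; y] by left; apply/is_edgeP; exists v, y.
have hd t : t \in [set v; y] ->
    t \notin cover P /\ forall s, s \in cover P -> ~~ e t s.
  rewrite !inE => /orP [] /eqP ->; split => //.
  - by apply: link_packing_notin hP _; rewrite eqxx.
  - by move=> s /(link_packing_cover hP) [].
  - by apply: link_packing_notin hP _; rewrite vy orbT.
have [hc hw hcov] := packingU1 e_sym hPc hB hd.
exists ([set v; y] |: P); split => //.
  by rewrite hcov subUset set2_subset //= (link_packing_sub hP).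
by rewrite hw hPw cards2 (neq_edge e_irr vy).
Qed.

Ltac neq_tac := solve [ done
 | by apply: (neq_edge e_irr)
 | by rewrite eq_sym; apply: (neq_edge e_irr)
 | by apply: (neq_edge e_irr); rewrite e_sym
 | by rewrite eq_sym; apply: (neq_edge e_irr); rewrite e_sym
 | match goal with H1 : is_true (?u \in ?X), H2 : is_true (?v \notin ?X)
     |- is_true (?u != ?v) => exact: (neq_mem_notin H1 H2) end
 | match goal with H1 : is_true (?u \in ?X), H2 : is_true (?v \notin ?X)
     |- is_true (?v != ?u) => by rewrite eq_sym; exact: (neq_mem_notin H1 H2) end ].

Definition nbrs_among v a b := forall t, t \in S -> e v t -> (t == a) || (t == b).

Section ExtremalStep.
Hypothesis mnum_S : mnum_in e S = j.+1.
Hypothesis nbr_in_S : forall v, v \in S -> exists2 y, y \in S & e v y.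
Hypothesis link_packing_ex : forall v, v \in S -> exists P, link_packing v P.
Hypothesis link_dominated : forall v P y, v \in S -> link_packing v P ->
  y \in S -> e v y -> exists2 t, t \in cover P & e y t.
Hypothesis link_nbr : forall v z, v \in S -> z \in S :\: cnbhd e v ->
  exists2 t, t \in S :\: cnbhd e v & e z t.

Lemma nbr_off_cnbhd v y : v \in S -> y \in S -> e v y ->
  exists2 t, t \in S & e y t && (t \notin cnbhd e v).
Proof.
move=> vS yS vy; have [P hP] := link_packing_ex vS.
have [t tP yt] := link_dominated vS hP yS vy.
case: hP => _ /subsetP /(_ t tP); rewrite inE => /andP [tn tS] _.
by exists t => //; rewrite yt tn.
Qed.

Lemma no_large_matching M : matching e M -> (forall A, A \in M -> A \subset S) ->
  #|M| != j.+2.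
Proof. by move=> hM /(mnum_in_max hM); rewrite mnum_S neq_ltn ltnS => ->. Qed.

(* otherwise the packing, two edges at [x] and [y] and the 2-matching of the
   5-cycle avoiding [t] form a matching of size [j + 2] *)
Lemma nbr_nadj_c5_block x P y y' B t : x \in S -> link_packing x P ->
  y \in S -> y' \in S -> e x y -> e x y' -> y != y' ->
  B \in P -> is_c5 e B -> t \in B -> ~~ e y t.
Proof.
move=> xS hP yS y'S xy xy' yy' BP hC tB; apply/negP => yt.
have [hPc hPS hPw] := hP.
have hw B' : B' \in P -> t \in B' -> is_c5 e B'.
  by move=> B'P tB'; rewrite (packing_block_eq hPc B'P BP tB' tB).
have [M [hM hcM] hA] := packing_matching e_sym e_irr hPc hw.
have tC : t \in cover P by apply/bigcupP; exists B.
have [tS tx xt] := link_packing_cover hP tC.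
have xC : x \notin cover P by apply: link_packing_notin hP _; rewrite eqxx.
have yC : y \notin cover P by apply: link_packing_notin hP _; rewrite xy orbT.
have y'C : y' \notin cover P by apply: link_packing_notin hP _; rewrite xy' orbT.
have h1 A : A \in M -> (x \notin A) && (y' \notin A).
  by move=> /hA [sA _]; rewrite !(notin_subset sA).
have [hM1 hc1] := matchingU1 e_irr hM xy' h1.
have h2 A : A \in [set x; y'] |: M -> (y \notin A) && (t \notin A).
  move=> /setU1P [->|/hA [sA tA]]; last by rewrite tA (notin_subset sA).
  by rewrite !notin_set2 //; neq_tac.
have [hM2 hc2] := matchingU1 e_irr hM1 yt h2.
have sM A : A \in [set y; t] |: ([set x; y'] |: M) -> A \subset S.
  move=> /setU1P [->|/setU1P [->|/hA [sA _]]]; try exact: set2_subset.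
  exact: subset_trans sA (link_packing_sub hP).
by have := no_large_matching hM2 sM; rewrite hc2 hc1 hcM hPw eqxx.
Qed.

Lemma link_packing_drop_edge x P a b : link_packing x P -> [set a; b] \in P ->
  e a b -> exists2 M, matching e M /\ #|M|.+1 = j & forall A, A \in M ->
    A \subset S /\ forall u, (u \notin cover P) || (u \in [set a; b]) -> u \notin A.
Proof.
move=> hP BP ab; have [hPc _ hPw] := hP; set B := [set a; b] in BP *.
have hP' := packing_sub (subD1set P B) hPc.
have hw B' : B' \in P :\ B -> a \in B' -> is_c5 e B'.
  move=> /setD1P [hne B'P] aB'; case/eqP: hne.
  by apply: (packing_block_eq hPc B'P BP aB'); rewrite !inE eqxx.
have [M [hM hcM] hA] := packing_matching e_sym e_irr hP' hw.
exists M; first by rewrite hcM -hPw (weightD1 BP) cards2 (neq_edge e_irr ab).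
move=> A /hA [sA _]; split.
  apply: subset_trans sA (subset_trans (cover_subset (subD1set P B)) _).
  exact: link_packing_sub hP.
move=> u hu; apply/negP => uA.
have [h1 h2] := packing_coverD1 hPc BP (subsetP sA u uA).
by case/orP: hu => hu; [rewrite h1 in hu | rewrite hu in h2].
Qed.

(* otherwise [xy'], [ya], [br] and a maximum matching of the packing without
   the block [ab] form a matching of size [j + 2] *)
Lemma edge_block_partner x P y y' a b r : x \in S -> link_packing x P ->
  y \in S -> y' \in S -> e x y -> e x y' -> y != y' ->
  [set a; b] \in P -> e a b -> e y a -> r \in S -> e b r ->
  (r == a) || (r == y) || (r == y').
Proof.
move=> xS hP yS y'S xy xy' yy' BP ab ya rS br.
apply: contraT; rewrite !negb_or => /andP [/andP [ra ry] ry'].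
have [hPc _ _] := hP; set B := [set a; b] in BP *.
have aB : a \in B by rewrite !inE eqxx.
have bB : b \in B by rewrite !inE eqxx orbT.
have aC : a \in cover P by apply/bigcupP; exists B.
have bC : b \in cover P by apply/bigcupP; exists B.
have [[aS _ _] [bS _ nxb]] := (link_packing_cover hP aC, link_packing_cover hP bC).
have xC : x \notin cover P by apply: link_packing_notin hP _; rewrite eqxx.
have yC : y \notin cover P by apply: link_packing_notin hP _; rewrite xy orbT.
have y'C : y' \notin cover P by apply: link_packing_notin hP _; rewrite xy' orbT.
have rC : r \notin cover P.
  apply/negP => /bigcupP [B' B'P rB'].
  have [hBB|hne] := eqVneq B' B.
    move: rB'; rewrite hBB !inE (negbTE ra) /= => /eqP hrb.
    by rewrite hrb e_irr in br.
  by have := packing_nonadj hPc BP B'P _ bB rB'; rewrite eq_sym hne br => /(_ isT).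
have rx : r != x by apply: contraTneq br => ->; rewrite e_sym.
have [M [hM hcM] hA] := link_packing_drop_edge hP BP ab.
have nA A u : A \in M -> (u \notin cover P) || (u \in B) -> u \notin A.
  by move=> /hA [_]; apply.
have h1 A : A \in M -> (x \notin A) && (y' \notin A).
  by move=> AM; rewrite !(nA A) ?xC ?y'C.
have [hM1 hc1] := matchingU1 e_irr hM xy' h1.
have h2 A : A \in [set x; y'] |: M -> (y \notin A) && (a \notin A).
  move=> /setU1P [->|AM]; first by rewrite !notin_set2 //; neq_tac.
  by rewrite !(nA A) ?yC ?aB ?orbT.
have [hM2 hc2] := matchingU1 e_irr hM1 ya h2.
have h3 A : A \in [set y; a] |: ([set x; y'] |: M) -> (b \notin A) && (r \notin A).
  move=> /setU1P [->|/setU1P [->|AM]]; try by rewrite !notin_set2 //; neq_tac.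
  by rewrite !(nA A) ?bB ?rC ?orbT.
have [hM3 hc3] := matchingU1 e_irr hM2 br h3.
have sM A : A \in [set b; r] |: ([set y; a] |: ([set x; y'] |: M)) -> A \subset S.
  by move=> /setU1P [->|/setU1P [->|/setU1P [->|/hA []]]] //; apply: set2_subset.
by have := no_large_matching hM3 sM; rewrite hc3 hc2 hc1 hcM eqxx.
Qed.

Section C5AroundVertex.
Variables (x : T) (P : {set {set T}}) (y1 y2 w1 w2 : T).
Hypotheses (xS : x \in S) (hP : link_packing x P).
Hypotheses (y1S : y1 \in S) (y2S : y2 \in S) (xy1 : e x y1) (xy2 : e x y2).
Hypothesis y2_off : y2 \notin cnbhd e y1.
Hypotheses (wP : [set w1; w2] \in P) (w12 : e w1 w2) (y1w1 : e y1 w1).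

Let y21 : y2 != y1. Proof. by move: y2_off; rewrite !inE negb_or => /andP []. Qed.
Let w1C : w1 \in cover P.
Proof. by apply/bigcupP; exists [set w1; w2]; rewrite ?set21. Qed.
Let w2C : w2 \in cover P.
Proof. by apply/bigcupP; exists [set w1; w2]; rewrite ?set22. Qed.
Let w1S : w1 \in S. Proof. by case: (link_packing_cover hP w1C). Qed.
Let w2S : w2 \in S. Proof. by case: (link_packing_cover hP w2C). Qed.

Lemma far_nbr_eq y r : y \in S -> e x y -> y != y1 ->
  r \in S -> e w2 r -> r \notin cnbhd e w1 -> r == y.
Proof.
move=> yS xy yy1 rS w2r; rewrite !inE negb_or => /andP [rw1 w1r].
have ry1 : r != y1 by apply: contraNneq w1r => ->; rewrite e_sym.
have := edge_block_partner xS hP y1S yS xy1 xy _ wP w12 y1w1 rS w2r.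
by rewrite eq_sym yy1 (negbTE rw1) (negbTE ry1) => /(_ isT).
Qed.

Lemma far_end_adj_y2 : e w2 y2 && ~~ e w1 y2.
Proof.
have [r rS /andP [w2r rN]] := nbr_off_cnbhd w1S w2S w12.
rewrite -(eqP (far_nbr_eq y2S xy2 y21 rS w2r rN)) w2r.
by move: rN; rewrite !inE negb_or => /andP [].
Qed.

Lemma nbrs_x : nbrs_among x y1 y2.
Proof.
move=> t tS xt; have [->//|ty1] := eqVneq t y1.
have [r rS /andP [w2r rN]] := nbr_off_cnbhd w1S w2S w12.
by rewrite -(eqP (far_nbr_eq tS xt ty1 rS w2r rN)) far_nbr_eq.
Qed.

Lemma far_end_nadj_y1 : ~~ e w2 y1.
Proof.
apply/negP => w2y1.
have [_ w2x nxw2] := link_packing_cover hP w2C.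
have xN : x \in S :\: cnbhd e w2.
  by rewrite !inE negb_or xS andbT eq_sym w2x e_sym.
have [t /in_setD_cnbhd [tS _ nw2t] xt] := link_nbr w2S xN.
case/orP: (nbrs_x tS xt) nw2t => /eqP ->; first by rewrite w2y1.
by case/andP: far_end_adj_y2 => ->.
Qed.

Lemma nbrs_far_end : nbrs_among w2 w1 y2.
Proof.
move=> t tS w2t.
have := edge_block_partner xS hP y1S y2S xy1 xy2 _ wP w12 y1w1 tS w2t.
case/(_ _)/orP; first by rewrite eq_sym.
  by case/orP => [->//|/eqP ty1]; have := far_end_nadj_y1; rewrite -ty1 w2t.
by move=> ->; rewrite orbT.
Qed.

Lemma nbrs_near_end : nbrs_among w1 w2 y1.
Proof.
move=> t tS w1t.
have wP' : [set w2; w1] \in P by rewrite setUC.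
have [y2w2 nw1y2] := andP far_end_adj_y2.
have := edge_block_partner xS hP y2S y1S xy2 xy1 y21 wP' _ _ tS w1t.
rewrite e_sym w12 e_sym y2w2 => /(_ isT isT) /orP [/orP [->//|/eqP ty2]|->].
  by rewrite -ty2 w1t in nw1y2.
by rewrite orbT.
Qed.

Lemma c5_around : c5 e x y1 w1 w2 y2.
Proof.
have [_ xw1 nxw1] := link_packing_cover hP w1C.
have [_ xw2 nxw2] := link_packing_cover hP w2C.
have xC : x \notin cover P by apply: link_packing_notin hP _; rewrite eqxx.
have y1C : y1 \notin cover P by apply: link_packing_notin hP _; rewrite xy1 orbT.
have y2C : y2 \notin cover P by apply: link_packing_notin hP _; rewrite xy2 orbT.
have [w2y2 nw1y2] := andP far_end_adj_y2.
have nw2y1 := far_end_nadj_y1.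
have /andP [_ y12n] : (y2 != y1) && ~~ e y1 y2.
  by move: y2_off; rewrite !inE negb_or.
rewrite /c5 /= !inE !negb_or; repeat (apply/andP; split).
all: solve [neq_tac | done | by rewrite e_sym | by rewrite eq_sym y21].
Qed.

End C5AroundVertex.

Lemma c5_through x : x \in S -> exists y1 y2 w1 w2 P,
  [/\ link_packing x P, [set w1; w2] \in P, c5 e x y1 w1 w2 y2 &
      [&& y1 \in S, y2 \in S, w1 \in S & w2 \in S]] /\
  [/\ nbrs_among x y1 y2, nbrs_among w1 w2 y1 & nbrs_among w2 w1 y2].
Proof.
move=> xS; have [P hP] := link_packing_ex xS.
have [y1 y1S xy1] := nbr_in_S xS.
have y1x : e y1 x by rewrite e_sym.
have [y2 y2S /andP [xy2 y2_off]] := nbr_off_cnbhd y1S xS y1x.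
have y21 : y2 != y1 by move: y2_off; rewrite !inE negb_or => /andP [].
have [w1 w1C y1w1] := link_dominated xS hP y1S xy1.
have /bigcupP [B BP w1B] := w1C.
have hE : is_edge e B.
  have [[blocks _] _ _] := hP.
  case: (blocks B BP) => // hC; have := nbr_nadj_c5_block xS hP y1S y2S xy1 xy2.
  by rewrite eq_sym y21 => /(_ _ _ isT BP hC w1B); rewrite y1w1.
have [w2 [hB w12]] : exists w2, B = [set w1; w2] /\ e w1 w2.
  move/is_edgeP: hE w1B => [a [b [-> ab]]].
  by rewrite !inE => /orP [] /eqP ->; [exists b | exists a; rewrite setUC e_sym].
rewrite hB in BP.
have [w1S _ _] := link_packing_cover hP w1C.
have w2C : w2 \in cover P by apply/bigcupP; exists [set w1; w2]; rewrite ?set22.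
have [w2S _ _] := link_packing_cover hP w2C.
exists y1, y2, w1, w2, P; split; split; rewrite ?y1S ?y2S ?w1S ?w2S //.
- exact: (c5_around xS hP y1S y2S xy1 xy2 y2_off BP w12 y1w1).
- exact: (nbrs_x xS hP y1S y2S xy1 xy2 y2_off BP w12 y1w1).
- exact: (nbrs_near_end xS hP y1S y2S xy1 xy2 y2_off BP w12 y1w1).
- exact: (nbrs_far_end xS hP y1S y2S xy1 xy2 y2_off BP w12 y1w1).
Qed.

(* on the 5-cycle through [v] given by [c5_through], [a] is a neighbour of [v]
   and [q] the next vertex, whose neighbours were determined there *)
Lemma nbrs_among_next v a b q z : v \in S -> a \in S ->
  nbrs_among v a b -> nbrs_among a v q -> z \in S -> e q z -> z != a ->
  nbrs_among q z a.
Proof.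
move=> vS aS hNv hNa zS qz za.
have [p1 [p2 [u [u' [Pv [[_ _ hc hS] [_ hu hu']]]]]]] := c5_through vS.
move: hS => /and4P [p1S p2S uS u'S].
move: (c5_uniq hc); rewrite /= !inE !negb_or.
move=> /and5P [/and4P [_ vu vu' _] /and3P [_ _ p12] _ _ _].
move: hc => /and4P [_ vp1 p1u /and4P [uu' u'p2 p2v _]].
case/orP: (hNv p1 p1S vp1) => [/eqP h1|h1].
  rewrite h1 in p1u.
  case/orP: (hNa u uS p1u) => /eqP hu0; first by rewrite hu0 eqxx in vu.
  rewrite -hu0 in qz *.
  have := hu z zS qz; rewrite h1 (negbTE za) orbF => /eqP hz'.
  by move=> t tS ut; have := hu t tS ut; rewrite -hz' h1.
have vp2 : e v p2 by rewrite e_sym.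
case/orP: (hNv p2 p2S vp2) => [/eqP h2|h2].
  have au' : e a u' by rewrite -h2 e_sym.
  case/orP: (hNa u' u'S au') => /eqP hu0; first by rewrite hu0 eqxx in vu'.
  rewrite -hu0 in qz *.
  have := hu' z zS qz; rewrite h2 (negbTE za) orbF => /eqP hz'.
  by move=> t tS ut; have := hu' t tS ut; rewrite -hz' h2.
by rewrite (eqP h1) (eqP h2) eqxx in p12.
Qed.

Lemma c5_component x : x \in S -> exists y1 y2 w1 w2 P,
  [/\ link_packing x P, [set w1; w2] \in P, c5 e x y1 w1 w2 y2 &
      [set x; y1; w1; w2; y2] \subset S] /\
  forall q t, q \in [set x; y1; w1; w2; y2] -> t \in S -> e q t ->
    t \in [set x; y1; w1; w2; y2].
Proof.
move=> xS.
have [y1 [y2 [w1 [w2 [P [[hP BP hc5 hS] [hx hw1 hw2]]]]]]] := c5_through xS.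
move: hS => /and4P [y1S y2S w1S w2S].
have hc5' := hc5; move: hc5' => /and4P [_ xy1 y1w1 /and4P [w12 w2y2 y2x _]].
move: (c5_uniq hc5); rewrite /= !inE !negb_or.
move=> /and5P [/and4P [_ xw1 xw2 _] _ _ _ _].
have y1x : e y1 x by rewrite e_sym.
have hy2 := nbrs_among_next w1S w2S hw1 hw2 xS y2x xw2.
have hy1 := nbrs_among_next w2S w1S hw2 hw1 xS y1x xw1.
exists y1, y2, w1, w2, P; split.
  by split => //; apply/subsetP => t /set5P [|[|[|[|]]]] ->.
move=> q t /set5P [|[|[|[|]]]] -> tS qt; apply/set5P.
- by case/orP: (hx t tS qt) => /eqP ->; tauto.
- by case/orP: (hy1 t tS qt) => /eqP ->; tauto.
- by case/orP: (hw1 t tS qt) => /eqP ->; tauto.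
- by case/orP: (hw2 t tS qt) => /eqP ->; tauto.
- by case/orP: (hy2 t tS qt) => /eqP ->; tauto.
Qed.

(* replace the edge block [w1 w2] of [P] by the closed 5-cycle through [x]:
   the weight goes up by one *)
Lemma extremal_packing_c5 x : x \in S ->
  exists P', [/\ packing e P', cover P' \subset S & weight P' = j.+1].
Proof.
move=> xS; have [y1 [y2 [w1 [w2 [P [[hP BP hc5 sQS] closed]]]]]] := c5_component xS.
set Q := [set x; y1; w1; w2; y2] in sQS closed *; set B := [set w1; w2] in BP.
have [hPc _ hPw] := hP.
move: (hc5) => /and4P [_ xy1 _ /and4P [w12 _ y2x _]].
have hP' := packing_sub (subD1set P B) hPc.
have hQ : block e Q by right; exists x, y1, w1, w2, y2.
have sQ s : s \in cover (P :\ B) -> s \in S /\ s \notin Q.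
  move=> sC; have [sC' sB] := packing_coverD1 hPc BP sC.
  have [sS sx nxs] := link_packing_cover hP sC'; split => //.
  apply/set5P => -[|[|[|[|]]]] hs; move: sB sx nxs; rewrite hs ?eqxx //.
  - by rewrite xy1.
  - by rewrite !inE eqxx.
  - by rewrite !inE eqxx orbT.
  - by rewrite e_sym y2x.
have hd t : t \in Q ->
    t \notin cover (P :\ B) /\ forall s, s \in cover (P :\ B) -> ~~ e t s.
  move=> tQ; split; first by apply/negP => /sQ [_]; rewrite tQ.
  by move=> s /sQ [sS]; apply: contra => /(closed t s tQ sS).
have [hc hw hcov] := packingU1 e_sym hP' hQ hd.
exists (Q |: (P :\ B)); split => //.
  rewrite hcov subUset sQS /=.
  exact: subset_trans (cover_subset (subD1set P B)) (link_packing_sub hP).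
move: hPw; rewrite hw (card_c5 hc5) (weightD1 BP) cards2 (neq_edge e_irr w12).
by move=> <-.
Qed.

End ExtremalStep.

Lemma extremal_packing_links x0 : x0 \in S -> mnum_in e S = j.+1 ->
  (forall v, v \in S -> exists2 y, y \in S & e v y) ->
  (forall v, v \in S -> exists P, link_packing v P) ->
  (forall v z, v \in S -> z \in S :\: cnbhd e v ->
     exists2 t, t \in S :\: cnbhd e v & e z t) ->
  exists P', [/\ packing e P', cover P' \subset S & weight P' = j.+1].
Proof.
move=> x0S mnum_S nbr_in_S link_packing_ex link_nbr.
have [[v [P [y [vS hP yS vy hy]]]]|dominated] := classic (exists v P y,
  [/\ v \in S, link_packing v P, y \in S, e v y &
      forall t, t \in cover P -> ~~ e y t]).
  exact: link_packing_add_edge vS hP yS vy hy.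
apply: (extremal_packing_c5 mnum_S nbr_in_S link_packing_ex _ link_nbr x0S).
move=> v P y vS hP yS vy; apply: NNPP => hne; apply: dominated.
by exists v, P, y; split => // t tP; apply/negP => yt; apply: hne; exists t.
Qed.

End LinkPackings.

Section ExtremalPacking.
Variables (T : finType) (e : rel T) (K : fieldType).
Hypotheses (e_sym : symmetric e) (e_irr : irreflexive e).
Implicit Types (S : {set T}) (v : T).

Lemma redhom_nbr S k v : redhom_nonzero e K S k -> v \in S ->
  exists2 y, y \in S & e v y.
Proof.
move=> hr vS; apply: NNPP => hne; apply: (redhom_isolated e_sym e_irr vS _ hr).
by move=> y yS; apply/negP => vy; apply: hne; exists y.
Qed.

Lemma extremal_packing S k : redhom_nonzero e K S k -> mnum_in e S = k ->
  exists P, [/\ packing e P, cover P \subset S & weight P = k].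
Proof.
have [n] := ubnP #|S|; elim: n S k => // n IH S k /ltnSE leSn hr hm.
have [S0|[x0 x0S]] := set_0Vmem S.
  rewrite S0 in hr; rewrite (redhom_set0 hr) in hm *; exists set0; split.
  - by split => [B|B1 B2]; rewrite inE.
  - by rewrite /cover big_set0 sub0set.
  - by rewrite /weight big_set0.
case: k hr hm => [hr|j hr] hm.
  by rewrite (redhom0_set0 e_sym e_irr hr) inE in x0S.
have ltS v (A : {set T}) : v \in S -> v \in A -> #|S :\: A| < n.
  move=> vS vA; apply: leq_trans leSn; rewrite (cardsD1 v S) vS add1n ltnS.
  apply/subset_leq_card/subsetP => t; rewrite !inE => /andP [tA ->].
  by rewrite andbT; apply: contraNneq tA => ->.
have [[v [vS hv]]|no_del] :=
  classic (exists v, v \in S /\ redhom_nonzero e K (S :\ v) j.+1).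
  have hm' : mnum_in e (S :\ v) = j.+1.
    apply/eqP; rewrite eqn_leq (redhom_le_mnum_in e_sym e_irr hv) andbT -hm.
    exact: mnum_in_mono (subD1set S v).
  have [P [h1 h2 h3]] := IH _ _ (ltS _ _ vS (set11 v)) hv hm'.
  by exists P; split => //; apply: subset_trans h2 (subD1set S v).
have hlink v : v \in S -> redhom_nonzero e K (S :\: cnbhd e v) j.
  move=> vS; case: (redhom_split e_sym e_irr vS hr) => // h.
  by case: no_del; exists v.
apply: (extremal_packing_links e_sym e_irr x0S hm (fun v => redhom_nbr hr)).
  move=> v vS; have [y yS vy] := redhom_nbr hr vS.
  have hm' : mnum_in e (S :\: cnbhd e v) = j.
    apply/eqP; rewrite eqn_leq (redhom_le_mnum_in e_sym e_irr (hlink v vS)) andbT.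
    rewrite -ltnS -hm.
    exact: mnum_in_cnbhd vS yS vy.
  have [P [h1 h2 h3]] := IH _ _ (ltS _ _ vS (setU11 v _)) (hlink v vS) hm'.
  by exists P; split.
by move=> v z vS; apply: redhom_nbr (hlink v vS).
Qed.

End ExtremalPacking.

(** * Connected graphs with [im < reg = m] *)

Section Connected.
Variables (T : finType) (e : rel T).
Hypotheses (e_sym : symmetric e) (e_irr : irreflexive e).
Implicit Types (P : {set {set T}}) (Q X : {set T}).

Lemma connect_exit X a t : a \in X -> t \notin X -> connect e a t ->
  exists q z, [/\ q \in X, z \notin X & e q z].
Proof.
move=> aX tX /connectP [p hp ht].
elim: p a aX hp ht => [|z p IH] a aX /= hp ht; first by rewrite ht aX in tX.
move/andP: hp => [az hp]; have [zX|zX] := boolP (z \in X); first exact: IH hp ht.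
by exists a, z.
Qed.

Lemma packing_edges_le_im P : packing e P -> (forall B, B \in P -> ~ is_c5 e B) ->
  weight P <= induced_matching_number e.
Proof.
move=> [blocks nonadj] noc5.
have hE B : B \in P -> is_edge e B by move=> BP; case: (blocks B BP) => // /noc5 [].
have -> : weight P = #|P|.
  by rewrite /weight -sum1_card; apply: eq_bigr => B /hE /(card_edge e_irr) ->.
apply: (@leq_bigmax_cond _ (induced_matching e)); apply/andP; split.
  by apply/matchingP; split => // A B AP BP AB; case: (nonadj A B AP BP AB).
apply/forallP => A; apply/implyP => AP; apply/forallP => B; apply/implyP => BP.
apply/implyP => AB; apply/forallP => x; apply/implyP => xA.
by apply/forallP => y; apply/implyP; apply: (nonadj A B AP BP AB).2.
Qed.

(* an edge [qz] leaving the 5-cycle [Q] extends the matching of the packing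
   that avoids [q] *)
Lemma packing_c5_block_full P Q : connected_graph e -> packing e P ->
  weight P = matching_number e -> Q \in P -> is_c5 e Q -> forall t, t \in Q.
Proof.
move=> conn hP wP QP hQ t; have [a [b [c [d [g [_ hQe]]]]]] := hQ.
have aQ : a \in Q by rewrite hQe !inE eqxx.
apply: contraT => tQ; have [q [z [qQ zQ qz]]] := connect_exit aQ tQ (conn a t).
have zC : z \notin cover P.
  apply/negP => /bigcupP [B' B'P zB'].
  have hne : Q != B' by apply: contraNneq zQ => ->.
  by have := packing_nonadj hP QP B'P hne qQ zB'; rewrite qz.
have hw B : B \in P -> q \in B -> is_c5 e B.
  by move=> BP qB; rewrite -(packing_block_eq hP QP BP qQ qB).
have [M [hM hcM] hA] := packing_matching e_sym e_irr hP hw.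
have hA' A : A \in M -> (q \notin A) && (z \notin A).
  by move=> AM; have [sA ->] := hA A AM; rewrite (notin_subset sA zC).
have [hM' hc'] := matchingU1 e_irr hM qz hA'.
have := @leq_bigmax_cond _ (matching e) (fun M => #|M|) _ hM'.
by rewrite -/(matching_number e) hc' hcM wP ltnn.
Qed.

Lemma c5_C5rel a b c d g : c5 e a b c d g -> forall i k : 'I_5,
  e (nth a [:: a; b; c; d; g] i) (nth a [:: a; b; c; d; g] k) = C5rel i k.
Proof.
move=> /and4P [_ ab bc /and4P [cd dg ga /and4P [nac nad nbd /andP [nbg ncg]]]].
have nonedges := (negbTE nac, negbTE nad, negbTE nbd, negbTE nbg, negbTE ncg).
case=> [[|[|[|[|[|i]]]]] hi] [[|[|[|[|[|k]]]]] hk] //=; rewrite /C5rel /= ?e_irr //.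
all: first [by rewrite ?nonedges | by rewrite e_sym ?nonedges].
Qed.

Lemma iso_C5_of_c5 a b c d g : c5 e a b c d g ->
  (forall t, t \in [set a; b; c; d; g]) -> iso_C5 e.
Proof.
move=> h5 hall; set s := [:: a; b; c; d; g].
have us : uniq s := c5_uniq h5.
have ins t : t \in s by have := hall t; rewrite set5E inE.
pose f t : 'I_5 := inord (index t s); pose h (i : 'I_5) := nth a s i.
have hf : cancel f h.
  by move=> t; rewrite /h /f inordK ?nth_index // -[5]/(size s) index_mem.
have hh : cancel h f.
  move=> i; apply: ord_inj.
  have hi : i < size s by rewrite (ltn_ord i).
  by rewrite /f /h inordK (index_uniq a hi us).
have E i k : e (h i) (h k) = C5rel i k := c5_C5rel h5 i k.
exists f; split; first by exists h.
by move=> x y; rewrite -E !hf.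
Qed.

End Connected.

Theorem mainTheorem7 (K : fieldType) (T : finType) (e : rel T) (r : nat) :
  simple_graph e -> connected_graph e ->
  is_reg e K r ->
  (induced_matching_number e < r)%N ->
  r = matching_number e ->
  iso_C5 e.
Proof.
move=> [e_sym e_irr] conn [[S hS] _] im_lt_r r_m.
have mS : mnum_in e S = r.
  apply/eqP; rewrite eqn_leq (redhom_le_mnum_in e_sym e_irr hS) andbT r_m.
  exact: mnum_in_le.
have [P [hP _ wP]] := extremal_packing e_sym e_irr hS mS.
have [[Q QP hQ]|noc5] := classic (exists2 Q, Q \in P & is_c5 e Q).
  have Qfull := packing_c5_block_full e_sym e_irr conn hP (etrans wP r_m) QP hQ.
  have [a [b [c [d [g [h5 hQe]]]]]] := hQ.
  by apply: (iso_C5_of_c5 e_sym e_irr h5) => t; rewrite -hQe.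
have no_c5 B : B \in P -> ~ is_c5 e B by move=> BP hB; apply: noc5; exists B.
by have := packing_edges_le_im e_irr hP no_c5; rewrite wP leqNgt im_lt_r.
Qed.
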